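(* Let $\mathcal{D}$ be a finite nonempty set of disks in the plane with positive radii, and let $\delta^*$ be the minimum value $\delta\ge0$ for which there exist two points $p_1,p_2\in\mathbb{R}^2$ with $D(\delta)\cap\{p_1,p_2\}\neq\emptyset$ for every $D\in\mathcal{D}$. Let $p_1,p_2$ be two points with $D(\delta^* )\cap\{p_1,p_2\}\neq\emptyset$ for every $D\in\mathcal{D}$. Then $\delta^*=0$, or one of $p_1,p_2$ is a common boundary point of three $\delta^*$-inflated disks $D(\delta^* )$, $D\in\mathcal{D}$, or one of $p_1,p_2$ is a tangent point of two $\delta^*$-inflated disks.
   Context: For a disk $D$ with center $c(D)$ and radius $r(D)$ and a real $\delta\ge0$, the $\delta$-inflated disk $D(\delta)$ is the closed disk with center $c(D)$ and radius $r(D)+\delta$. A tangent point of two disks is a point where their boundary circles touch (the disks intersect in exactly that point). The paper assumes throughout that no disk of $\mathcal{D}$ contains another disk of $\mathcal{D}$. *)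

From mathcomp Require Import all_boot all_order all_algebra.
From mathcomp Require Import reals.
Set Implicit Arguments. Unset Strict Implicit. Unset Printing Implicit Defensive.
Import Order.TTheory GRing.Theory Num.Theory.
Local Open Scope ring_scope.

Section Disks.
Variable R : realType.

Definition point := (R * R)%type.
Definition disk := (point * R)%type.
Definition center (D : disk) : point := D.1.
Definition radius (D : disk) : R := D.2.

Definition dist (p q : point) : R :=
  Num.sqrt ((p.1 - q.1) ^+ 2 + (p.2 - q.2) ^+ 2).

Definition in_inflated (D : disk) (delta : R) (p : point) : Prop :=
  dist p (center D) <= radius D + delta.

Definition on_boundary (D : disk) (delta : R) (p : point) : Prop :=
  dist p (center D) = radius D + delta.

Definition covers (Ds : seq disk) (delta : R) (p1 p2 : point) : Prop :=
  forall D, D \in Ds -> in_inflated D delta p1 \/ in_inflated D delta p2.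

Definition disk_contains (D1 D2 : disk) : Prop :=
  forall p, in_inflated D2 0 p -> in_inflated D1 0 p.

Definition common_boundary3 (Ds : seq disk) (delta : R) (p : point) : Prop :=
  exists D1 D2 D3, [/\ D1 \in Ds, D2 \in Ds, D3 \in Ds,
    [/\ D1 != D2, D1 != D3 & D2 != D3] &
    [/\ on_boundary D1 delta p, on_boundary D2 delta p & on_boundary D3 delta p]].

Definition tangent_point (Ds : seq disk) (delta : R) (p : point) : Prop :=
  exists D1 D2, [/\ D1 \in Ds, D2 \in Ds, D1 != D2 &
    forall q, (in_inflated D1 delta q /\ in_inflated D2 delta q) <-> q = p].

End Disks.

(* If delta* > 0 and neither p_i is a triple boundary point or a tangent point,
   each p_i can be moved: at most two inflated disks have p_i on their boundary,
   and these (not being tangent at p_i) share a second point q_i, while the disks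
   containing p_i in their interior contain every point close enough to p_i.  So
   some q_i <> p_i lies in every inflated disk containing p_i.  By strict
   convexity the midpoint of p_i and q_i lies in the interior of each of these
   disks, finitely many strict inequalities leave a common slack e > 0, and the
   two midpoints cover the disks already at delta* - e, contradicting minimality. *)

From mathcomp Require Import all_boot all_order all_algebra.
From mathcomp Require Import reals.
From mathcomp Require Import ring lra.
From Stdlib Require Import Classical.
Import Order.TTheory GRing.Theory Num.Theory.
Local Open Scope ring_scope.
Set Implicit Arguments. Unset Strict Implicit. Unset Printing Implicit Defensive.

Section InflatedDisks.
Variable R : realType.
Implicit Types (p q c : point R) (D : disk R) (d s e : R).

Definition sqdist p c : R := (p.1 - c.1) ^+ 2 + (p.2 - c.2) ^+ 2.

Lemma sqdist_ge0 p c : 0 <= sqdist p c.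
Proof. by rewrite addr_ge0 // sqr_ge0. Qed.

Lemma sqdist_gt0 p q : p != q -> 0 < sqdist p q.
Proof.
move=> npq; rewrite lt_neqAle sqdist_ge0 andbT eq_sym.
apply: contra npq; rewrite paddr_eq0 ?sqr_ge0 // !sqrf_eq0 !subr_eq0.
by case: p q => [? ?] [? ?] /andP[/eqP /= -> /eqP ->].
Qed.

Lemma dist_ge0 p c : 0 <= dist p c.
Proof. exact: sqrtr_ge0. Qed.

Lemma sqr_dist p c : dist p c ^+ 2 = sqdist p c.
Proof. exact/sqr_sqrtr/sqdist_ge0. Qed.

Lemma dist_xx p : dist p p = 0.
Proof. by rewrite /dist !subrr expr2 mulr0 addr0 sqrtr0. Qed.

Lemma dist_le_sqr p c r : 0 <= r -> (dist p c <= r) = (sqdist p c <= r ^+ 2).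
Proof. by move=> r0; rewrite -sqr_dist ler_pXn2r // nnegrE dist_ge0. Qed.

Lemma dist_lt_sqr p c r : 0 <= r -> (dist p c < r) = (sqdist p c < r ^+ 2).
Proof. by move=> r0; rewrite -sqr_dist ltr_pXn2r // nnegrE dist_ge0. Qed.

Lemma inflated_radius_ge0 D d p : in_inflated D d p -> 0 <= radius D + d.
Proof. exact/le_trans/dist_ge0. Qed.

Lemma in_inflated_le D d1 d2 p :
  d1 <= d2 -> in_inflated D d1 p -> in_inflated D d2 p.
Proof. by move=> d12 /le_trans; apply; rewrite lerD2l. Qed.

Definition lerp p q s : point R :=
  (p.1 + s * (q.1 - p.1), p.2 + s * (q.2 - p.2)).

Lemma lerp1 p q : lerp p q 1 = q.
Proof. by case: q => ? ?; rewrite /lerp /=; congr pair; ring. Qed.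

Lemma lerp_lerp p q s t : lerp p (lerp p q s) t = lerp p q (s * t).
Proof. by rewrite /lerp /=; congr pair; ring. Qed.

Lemma lerp_neq p q s : q != p -> 0 < s -> lerp p q s != p.
Proof.
move=> nqp s0; apply: contra nqp; case: p q => [a b] [c e].
rewrite /lerp xpair_eqE /= -[_ == a]subr_eq0 -[_ == b]subr_eq0.
rewrite [a + _]addrC [b + _]addrC !addrK.
by rewrite !mulf_eq0 (gt_eqF s0) /= !subr_eq0 => /andP[/eqP -> /eqP ->].
Qed.

Lemma sqdist_lerp p q c s : sqdist (lerp p q s) c =
  (1 - s) * sqdist p c + s * sqdist q c - s * (1 - s) * sqdist q p.
Proof. by rewrite /sqdist /lerp /=; ring. Qed.

Lemma in_inflated_lerp D d p q s :
  in_inflated D d p -> in_inflated D d q -> 0 <= s <= 1 ->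
  in_inflated D d (lerp p q s).
Proof.
move=> hp; have r0 := inflated_radius_ge0 hp; move: hp.
rewrite /in_inflated !dist_le_sqr // sqdist_lerp => hp hq /andP[s0 s1].
have : 0 <= s * (1 - s) * sqdist q p by rewrite !mulr_ge0 ?sqdist_ge0 ?subr_ge0.
have : (1 - s) * sqdist p (center D) <= (1 - s) * (radius D + d) ^+ 2.
  by rewrite ler_wpM2l // subr_ge0.
have : s * sqdist q (center D) <= s * (radius D + d) ^+ 2 by rewrite ler_wpM2l.
lra.
Qed.

Lemma in_inflated_lerp_near D d p q :
  dist p (center D) < radius D + d -> exists2 s, 0 < s & in_inflated D d (lerp p q s).
Proof.
move=> hp; have r0 : 0 <= radius D + d := le_trans (dist_ge0 _ _) (ltW hp).
move: hp; rewrite /in_inflated dist_lt_sqr //.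
set A := sqdist p _; set B := sqdist q (center D); set r2 := _ ^+ 2 => hA.
have A0 : 0 <= A := sqdist_ge0 _ _.
have B0 : 0 <= B := sqdist_ge0 _ _.
have V0 : 0 <= sqdist q p := sqdist_ge0 _ _.
have K0 : 0 < r2 - A + B + 1 by lra.
(* [s * (r2 - A + B + 1) = r2 - A] gives both [s <= 1] and [s * B < r2 - A]. *)
exists ((r2 - A) / (r2 - A + B + 1)); first by rewrite divr_gt0 // subr_gt0.
have := divfK (lt0r_neq0 K0) (r2 - A); set s := _ / _ => sE.
have s0 : 0 <= s by rewrite divr_ge0 ?subr_ge0 ?ltW.
have s1 : s <= 1 by rewrite ler_pdivrMr // mul1r; lra.
rewrite dist_le_sqr // sqdist_lerp -/A -/B -/r2.
have s1' : 0 <= 1 - s by rewrite subr_ge0.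
have : 0 <= s * (r2 - A + 1) by apply: mulr_ge0 => //; lra.
have := mulr_ge0 s0 A0; have := mulr_ge0 (mulr_ge0 s0 s1') V0.
lra.
Qed.

Definition midpoint p q : point R := lerp p q 2^-1.

Lemma dist_midpoint_lt D d p q : q != p ->
  in_inflated D d p -> in_inflated D d q ->
  dist (midpoint p q) (center D) < radius D + d.
Proof.
move=> nqp hp; have r0 := inflated_radius_ge0 hp; move: hp.
rewrite /in_inflated !dist_le_sqr // dist_lt_sqr // sqdist_lerp => hp hq.
have := sqdist_gt0 nqp.
lra.
Qed.

Lemma exists_common_threshold (T : eqType) (S : seq T) (P : T -> R -> Prop) b :
  0 < b ->
  (forall x e e', x \in S -> 0 < e' <= e -> P x e -> P x e') ->
  (forall x, x \in S -> exists2 e, 0 < e & P x e) ->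
  exists2 e, 0 < e <= b & forall x, x \in S -> P x e.
Proof.
move=> b0; elim: S => [|x S IH] Pdown Pex; first by exists b; rewrite ?b0 ?lexx.
have [|| e /andP[e0 eb] He] := IH.
- by move=> y e e' yS; apply: Pdown; rewrite inE yS orbT.
- by move=> y yS; apply: Pex; rewrite inE yS orbT.
have [ex ex0 Hx] := Pex x (mem_head _ _).
have m0 : 0 < Num.min e ex by rewrite lt_min e0.
exists (Num.min e ex); first by rewrite m0 ge_min eb.
move=> y; rewrite inE => /orP[/eqP -> | yS].
  by apply: Pdown Hx; [exact: mem_head | rewrite m0 ge_min lexx orbT].
by apply: Pdown (He y yS); [rewrite inE yS orbT | rewrite m0 ge_min lexx].
Qed.

Lemma exists_step_in_inflated d (Ds : seq (disk R)) p q :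
  (forall D, D \in Ds -> in_inflated D d p ->
     in_inflated D d q \/ dist p (center D) < radius D + d) ->
  exists2 s, 0 < s &
    forall D, D \in Ds -> in_inflated D d p -> in_inflated D d (lerp p q s).
Proof.
move=> hq; suff [s /andP[s0 _] hs] : exists2 s, 0 < s <= 1 &
    forall D, D \in Ds -> in_inflated D d p -> in_inflated D d (lerp p q s).
  by exists s.
apply: (exists_common_threshold
  (P := fun D s => in_inflated D d p -> in_inflated D d (lerp p q s))) => //.
- move=> D s s' _ /andP[s'0 s's] hs hp.
  have s0 := lt_le_trans s'0 s's.
  have -> : s' = s * (s' / s) by rewrite mulrC divfK ?lt0r_neq0.
  rewrite -lerp_lerp; apply: in_inflated_lerp hp (hs hp) _.
  by rewrite divr_ge0 ?(ltW s0) ?(ltW s'0) //= ler_pdivrMr // mul1r.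
- move=> D hD; have [hp|hnp] := boolP (dist p (center D) <= radius D + d); last first.
    by exists 1 => // hp; case/negP: hnp.
  case: (hq D hD hp) => [hqD | hlt]; first by exists 1; rewrite ?lerp1.
  by have [s s0 hs] := in_inflated_lerp_near q hlt; exists s.
Qed.

Lemma exists_shrink_midpoint d (Ds : seq (disk R)) p q b : 0 < b -> q != p ->
  (forall D, D \in Ds -> in_inflated D d p -> in_inflated D d q) ->
  exists2 e, 0 < e <= b &
    forall D, D \in Ds -> in_inflated D d p -> in_inflated D (d - e) (midpoint p q).
Proof.
move=> b0 nqp hq; apply: (exists_common_threshold
  (P := fun D e => in_inflated D d p -> in_inflated D (d - e) (midpoint p q))) => //.
- move=> D e e' _ /andP[_ e'e] he /he; apply: in_inflated_le.
  by rewrite lerD2l lerN2.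
- move=> D hD; have [hp|hnp] := boolP (dist p (center D) <= radius D + d); last first.
    by exists 1 => // hp; case/negP: hnp.
  have hm := dist_midpoint_lt nqp hp (hq D hD hp).
  exists (radius D + d - dist (midpoint p q) (center D)); first by rewrite subr_gt0.
  by move=> _; rewrite /in_inflated; lra.
Qed.

Definition movable (Ds : seq (disk R)) d p :=
  exists2 q, q != p & forall D, D \in Ds -> in_inflated D d p -> in_inflated D d q.

Lemma movable_of_boundary (Ds : seq (disk R)) d p q : q != p ->
  (forall D, D \in Ds -> on_boundary D d p -> in_inflated D d q) ->
  movable Ds d p.
Proof.
move=> nqp hq; have [|s s0 hs] := @exists_step_in_inflated d Ds p q.
  move=> D hD; rewrite /in_inflated le_eqVlt => /orP[/eqP hb | hlt]; last by right.
  by left; apply: hq.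
by exists (lerp p q s); first exact: lerp_neq.
Qed.

Lemma exists_in_boundary_disks (Ds : seq (disk R)) d p :
  (forall D, D \in Ds -> 0 < radius D + d) ->
  ~ common_boundary3 Ds d p -> ~ tangent_point Ds d p ->
  exists2 q, q != p & forall D, D \in Ds -> on_boundary D d p -> in_inflated D d q.
Proof.
move=> hr ncb ntp.
case: (classic (exists D1 D2, [/\ D1 \in Ds, D2 \in Ds, D1 != D2 &
                  on_boundary D1 d p /\ on_boundary D2 d p])).
  move=> [D1 [D2 [hD1 hD2 n12 [hb1 hb2]]]].
  have onD12 D : D \in Ds -> on_boundary D d p -> D = D1 \/ D = D2.
    move=> hD hb; have [->|n1] := eqVneq D D1; first by left.
    have [->|n2] := eqVneq D D2; first by right.
    by case: ncb; exists D1, D2, D; split => //; split; rewrite // eq_sym.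
  have [q [hq1 hq2] nqp] :
      exists2 q, in_inflated D1 d q /\ in_inflated D2 d q & q != p.
    apply: NNPP => hno; apply: ntp; exists D1, D2; split => // q; split.
      by move=> hq; apply: NNPP => nqp; apply: hno; exists q => //; apply/eqP.
    by move=> ->; rewrite /in_inflated hb1 hb2 lexx.
  by exists q => // D hD /(onD12 D hD) [] ->.
move=> no2; case: (classic (exists2 D1, D1 \in Ds & on_boundary D1 d p)).
  move=> [D1 hD1 hb1]; exists (center D1).
    apply/eqP => hc; move: hb1; rewrite /on_boundary -hc dist_xx => h.
    by have := hr _ hD1; rewrite -h ltxx.
  move=> D hD hb; have -> : D = D1.
    by apply: NNPP => nD; apply: no2; exists D, D1; split => //; apply/eqP.
  by rewrite /in_inflated dist_xx ltW // hr.
move=> no1; exists (p.1 + 1, p.2); last by move=> D hD hb; case: no1; exists D.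
by apply/eqP => /(congr1 fst) /eqP; rewrite -subr_eq0 addrC addKr oner_eq0.
Qed.

Lemma unpinned_movable (Ds : seq (disk R)) d p :
  (forall D, D \in Ds -> 0 < radius D + d) ->
  ~ common_boundary3 Ds d p -> ~ tangent_point Ds d p -> movable Ds d p.
Proof.
by move=> hr ncb ntp; have [q nqp hq] := exists_in_boundary_disks hr ncb ntp;
  apply: movable_of_boundary nqp hq.
Qed.

Lemma covers_shrink (Ds : seq (disk R)) d p1 p2 : 0 < d -> covers Ds d p1 p2 ->
  movable Ds d p1 -> movable Ds d p2 ->
  exists2 e, 0 < e <= d & exists p1' p2', covers Ds (d - e) p1' p2'.
Proof.
move=> d0 cov [q1 nq1 hq1] [q2 nq2 hq2].
have [e1 /andP[e10 e1d] he1] := exists_shrink_midpoint d0 nq1 hq1.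
have [e2 /andP[e20 e2e1] he2] := exists_shrink_midpoint e10 nq2 hq2.
exists e2; first by rewrite e20 (le_trans e2e1 e1d).
exists (midpoint p1 q1), (midpoint p2 q2) => D hD.
case: (cov D hD) => hp; [left | right]; last exact: he2.
by apply: in_inflated_le (he1 D hD hp); rewrite lerD2l lerN2.
Qed.

End InflatedDisks.

Theorem lemma2 (R : realType) (Ds : seq (disk R)) (delta_star : R)
    (p1 p2 : point R) :
  Ds != [::] -> uniq Ds ->
  (forall D, D \in Ds -> 0 < radius D) ->
  (forall D1 D2, D1 \in Ds -> D2 \in Ds -> D1 != D2 -> ~ disk_contains D1 D2) ->
  0 <= delta_star ->
  (exists q1 q2, covers Ds delta_star q1 q2) ->
  (forall delta, 0 <= delta -> (exists q1 q2, covers Ds delta q1 q2) ->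
     delta_star <= delta) ->
  covers Ds delta_star p1 p2 ->
  delta_star = 0
  \/ (common_boundary3 Ds delta_star p1 \/ common_boundary3 Ds delta_star p2)
  \/ (tangent_point Ds delta_star p1 \/ tangent_point Ds delta_star p2).
Proof.
move=> _ _ rpos _ d0 _ dmin cov.
have [->|dn0] := eqVneq delta_star 0; first by left.
have dpos : 0 < delta_star by rewrite lt_def dn0.
have hr D : D \in Ds -> 0 < radius D + delta_star by move=> hD; rewrite addr_gt0 ?rpos.
right; apply: NNPP => pinned.
have [||e /andP[e0 ed] shrunk] := covers_shrink dpos cov.
- by apply: unpinned_movable => // h; apply: pinned; tauto.
- by apply: unpinned_movable => // h; apply: pinned; tauto.
by have := dmin _ _ shrunk; rewrite subr_ge0 => /(_ ed); lra.
Qed.
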